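(* Let $v_1\ge v_2\ge v_3\ge v_4>0$ and $p_{ij}=\frac{v_i}{v_i+v_j}$. For $i\in\{1,2,3,4\}$ and $j\in\{A,B,C\}$ let $T_{ij}$ be the probability that team $a_i$ wins the knockout tournament of type $j$. Then $T_{1A}\ge T_{1B}\ge T_{1C}$, $T_{2B}\ge T_{2A}\ge T_{2C}$, $T_{3C}\ge T_{3A}\ge T_{3B}$, and $T_{4C}\ge T_{4B}\ge T_{4A}$.
   Context: Four teams $a_1,\dots,a_4$ with weights $v_1,\dots,v_4$. In any game between $a_i$ and $a_j$, $a_i$ wins with probability $p_{ij}=v_i/(v_i+v_j)$, independently of other games. A knockout tournament consists of two first-round games whose winners meet in a final. Tournament $A$: first round $a_1$ vs $a_4$ and $a_2$ vs $a_3$. Tournament $B$: first round $a_1$ vs $a_3$ and $a_2$ vs $a_4$. Tournament $C$: first round $a_1$ vs $a_2$ and $a_3$ vs $a_4$. *)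

From mathcomp Require Import all_boot all_order all_algebra.
Set Implicit Arguments. Unset Strict Implicit. Unset Printing Implicit Defensive.
Import Order.TTheory GRing.Theory Num.Theory.
Local Open Scope ring_scope.

(* Teams a_1..a_4 are indexed by 'I_4 (a_1 = index 0, ..., a_4 = index 3). *)
Section Tourn.
Variable R : realFieldType.
Variable v : 'I_4 -> R.

Definition pwin (i j : 'I_4) : R := v i / (v i + v j).

(* Knockout tournament with first-round games  a vs b  and  c vs d;
   winners meet in the final, all games independent.
   ko a b c d x = probability that team x wins the tournament. *)
Definition ko (a b c d x : 'I_4) : R :=
  if x == a then pwin a b * (pwin c d * pwin a c + pwin d c * pwin a d)
  else if x == b then pwin b a * (pwin c d * pwin b c + pwin d c * pwin b d)
  else if x == c then pwin c d * (pwin a b * pwin c a + pwin b a * pwin c b)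
  else if x == d then pwin d c * (pwin a b * pwin d a + pwin b a * pwin d b)
  else 0.

Definition t1 : 'I_4 := inord 0.
Definition t2 : 'I_4 := inord 1.
Definition t3 : 'I_4 := inord 2.
Definition t4 : 'I_4 := inord 3.

Definition TA (x : 'I_4) : R := ko t1 t4 t2 t3 x.
Definition TB (x : 'I_4) : R := ko t1 t3 t2 t4 x.
Definition TC (x : 'I_4) : R := ko t1 t2 t3 t4 x.
End Tourn.

From mathcomp Require Import all_boot all_order all_algebra.
From mathcomp Require Import ring lra.
Set Implicit Arguments. Unset Strict Implicit. Unset Printing Implicit Defensive.
Import Order.TTheory GRing.Theory Num.Theory.
Local Open Scope ring_scope.

(* A team of weight [s] that meets [x] in the first round and the winner of
   [y] against [z] in the final wins with probability
   [s^2 (s + H(y, z)) / ((s + x)(s + y)(s + z))], where [H] is the harmonic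
   mean.  The denominator is the same for every draw, so a team is better off
   the larger the harmonic mean of the other semifinal, i.e. the weaker its
   first-round opponent; each of the eight inequalities is an instance of
   this. *)

Section KnockoutWin.
Variable R : realFieldType.
Implicit Types s x y z : R.

Definition knockout_win s x y z :=
  s / (s + x) * (y / (y + z) * (s / (s + y)) + z / (z + y) * (s / (s + z))).

Definition harmonic_mean y z := 2 * y * z / (y + z).

Lemma knockout_winC s x y z : knockout_win s x y z = knockout_win s x z y.
Proof. by rewrite /knockout_win (addrC (y / _ * _)). Qed.

Lemma knockout_winE s x y z : 0 < s -> 0 < x -> 0 < y -> 0 < z ->
  knockout_win s x y z
    = s ^+ 2 / ((s + x) * (s + y) * (s + z)) * (s + harmonic_mean y z).
Proof.
move=> s_gt0 x_gt0 y_gt0 z_gt0; rewrite /knockout_win /harmonic_mean.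
by field; rewrite !lt0r_neq0 ?addr_gt0.
Qed.

Lemma ler_harmonic_mean y z y' z' : 0 < y -> 0 < z -> y <= y' -> z <= z' ->
  harmonic_mean y z <= harmonic_mean y' z'.
Proof.
move=> y_gt0 z_gt0 le_yy' le_zz'.
have y'_gt0 : 0 < y' by lra.
have z'_gt0 : 0 < z' by lra.
rewrite /harmonic_mean -subr_ge0.
have -> : 2 * y' * z' / (y' + z') - 2 * y * z / (y + z)
    = 2 * (y * y' * (z' - z) + z * z' * (y' - y)) / ((y + z) * (y' + z')).
  by field; rewrite !lt0r_neq0 ?addr_gt0.
apply: divr_ge0; last by rewrite ltW ?mulr_gt0 ?addr_gt0.
by rewrite mulr_ge0 // addr_ge0 // mulr_ge0 ?subr_ge0 // mulr_ge0 // ltW.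
Qed.

Lemma knockout_win_weaker_opponent s x y z : 0 < s -> 0 < x -> x <= y -> 0 < z ->
  knockout_win s y x z <= knockout_win s x y z.
Proof.
move=> s_gt0 x_gt0 le_xy z_gt0; have y_gt0 : 0 < y by lra.
rewrite !knockout_winE // [(s + y) * _]mulrC.
rewrite ler_wpM2l ?lerD2l ?ler_harmonic_mean //.
by rewrite divr_ge0 ?exprn_ge0 ?ltW ?mulr_gt0 ?addr_gt0.
Qed.

End KnockoutWin.

Lemma koE (R : realFieldType) (v : 'I_4 -> R) (a b c d : 'I_4) :
  uniq [:: a; b; c; d] ->
  [/\ ko v a b c d a = knockout_win (v a) (v b) (v c) (v d),
      ko v a b c d b = knockout_win (v b) (v a) (v c) (v d),
      ko v a b c d c = knockout_win (v c) (v d) (v a) (v b) &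
      ko v a b c d d = knockout_win (v d) (v c) (v a) (v b)].
Proof.
rewrite /= !inE !negb_or => /and4P[/and3P[/negPf ab /negPf ac /negPf ad]].
move=> /andP[/negPf bc /negPf bd] /negPf cd _.
by rewrite /ko !eqxx !(eq_sym _ a) (eq_sym c b) !(eq_sym d) ab ac ad bc bd cd.
Qed.

Lemma uniq_inord n (s : seq nat) : all (leq^~ n) s -> uniq s ->
  uniq [seq inord i : 'I_n.+1 | i <- s].
Proof.
move=> /allP s_le_n s_uniq; rewrite map_inj_in_uniq // => i j /s_le_n i_le /s_le_n j_le.
by move=> /(congr1 (@nat_of_ord _)); rewrite !inordK.
Qed.

Theorem lemma1 (R : realFieldType) (v : 'I_4 -> R)
  (h12 : v t1 >= v t2) (h23 : v t2 >= v t3) (h34 : v t3 >= v t4)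
  (h4 : 0 < v t4) :
  [/\ TA v t1 >= TB v t1 /\ TB v t1 >= TC v t1,
      TB v t2 >= TA v t2 /\ TA v t2 >= TC v t2,
      TC v t3 >= TA v t3 /\ TA v t3 >= TB v t3 &
      TC v t4 >= TB v t4 /\ TB v t4 >= TA v t4].
Proof.
rewrite /TA /TB /TC.
have [-> -> -> ->] := koE v
  (uniq_inord (n := 3) (s := [:: 0; 3; 1; 2]%N) isT isT : uniq [:: t1; t4; t2; t3]).
have [-> -> -> ->] := koE v
  (uniq_inord (n := 3) (s := [:: 0; 2; 1; 3]%N) isT isT : uniq [:: t1; t3; t2; t4]).
have [-> -> -> ->] := koE v
  (uniq_inord (n := 3) (s := [:: 0; 1; 2; 3]%N) isT isT : uniq [:: t1; t2; t3; t4]).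
(* In half of the cases the finalist shared by both draws is listed first. *)
split; split;
  (apply: knockout_win_weaker_opponent ||
   (rewrite knockout_winC [in X in _ <= X]knockout_winC;
    apply: knockout_win_weaker_opponent)); lra.
Qed.
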